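(* Let $a>b>0$, $c>0$, and for a real number $\mu\notin\{a^2,b^2,-c^2\}$ let $C_\mu=\{(x,y,z):\frac{x^2}{a^2-\mu}+\frac{y^2}{b^2-\mu}-\frac{z^2}{c^2+\mu}=0\}$ and $S_\mu=C_\mu\cap\mathbb{S}^2$; write $C=C_0$, $S=S_0$. Fix $\lambda$ with $-c^2<\lambda<b^2$ and let $F_\lambda$ be the linear map of $\mathbb{R}^3$ with diagonal matrix \[F_\lambda=\operatorname{diag}\Big(\tfrac{\sqrt{a^2-\lambda}}{a},\ \tfrac{\sqrt{b^2-\lambda}}{b},\ \tfrac{\sqrt{c^2+\lambda}}{c}\Big).\] Then $F_\lambda$ maps $S$ into $S_\lambda$. Moreover, if a point $v\in S$ belongs to $S_\mu$ for some $\mu\notin\{0,a^2,b^2,-c^2\}$, then $F_\lambda(v)$ also belongs to $S_\mu$.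
   Context: $\mathbb{S}^2$ is the unit sphere in $\mathbb{R}^3$. The conics $S_\mu$ form the confocal family of the spherical conic $S$. *)

From Stdlib Require Import Reals.
Open Scope R_scope.

Definition pt := (R * R * R)%type.

Definition in_cone (a b c mu : R) (p : pt) : Prop :=
  let '(x, y, z) := p in
  x ^ 2 / (a ^ 2 - mu) + y ^ 2 / (b ^ 2 - mu) - z ^ 2 / (c ^ 2 + mu) = 0.

Definition in_sphere (p : pt) : Prop :=
  let '(x, y, z) := p in x ^ 2 + y ^ 2 + z ^ 2 = 1.

Definition in_S (a b c mu : R) (p : pt) : Prop :=
  in_cone a b c mu p /\ in_sphere p.

Definition F (a b c lam : R) (p : pt) : pt :=
  let '(x, y, z) := p in
  (sqrt (a ^ 2 - lam) / a * x,
   sqrt (b ^ 2 - lam) / b * y,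
   sqrt (c ^ 2 + lam) / c * z).

(* Write Q_mu for the quadratic form defining the cone C_mu.  F_lambda multiplies the squared
   coordinates by (a^2 - lambda)/a^2, (b^2 - lambda)/b^2, (c^2 + lambda)/c^2, so everything is
   linear in (x^2, y^2, z^2), and partial fractions give
     |F v|^2 = |v|^2 - lambda Q_0(v),   Q_lambda(F v) = Q_0(v),
     mu Q_mu(F v) = lambda Q_0(v) + (mu - lambda) Q_mu(v). *)
From Stdlib Require Import Reals Lra.
Open Scope R_scope.

Definition cone_form (a b c mu : R) (p : pt) : R :=
  let '(x, y, z) := p in
  x ^ 2 / (a ^ 2 - mu) + y ^ 2 / (b ^ 2 - mu) - z ^ 2 / (c ^ 2 + mu).

Definition sqnorm (p : pt) : R := let '(x, y, z) := p in x ^ 2 + y ^ 2 + z ^ 2.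

Lemma in_cone_form (a b c mu : R) (p : pt) :
  in_cone a b c mu p <-> cone_form a b c mu p = 0.
Proof. destruct p as [[x y] z]; reflexivity. Qed.

Lemma in_sphere_sqnorm (p : pt) : in_sphere p <-> sqnorm p = 1.
Proof. destruct p as [[x y] z]; reflexivity. Qed.

Lemma pow2_sqrt_div_mul (t d x : R) :
  0 <= t -> d <> 0 -> (sqrt t / d * x) ^ 2 = t / d ^ 2 * x ^ 2.
Proof.
  intros Ht Hd.
  rewrite <- (sqrt_sqrt t Ht) at 2.
  field; exact Hd.
Qed.

Section ConfocalMap.

Variables a b c lam : R.
Hypothesis a_neq0 : a <> 0.
Hypothesis b_neq0 : b <> 0.
Hypothesis c_neq0 : c <> 0.
Hypothesis a2_sub_lam_gt0 : 0 < a ^ 2 - lam.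
Hypothesis b2_sub_lam_gt0 : 0 < b ^ 2 - lam.
Hypothesis c2_add_lam_gt0 : 0 < c ^ 2 + lam.

Ltac unfold_F :=
  unfold F, sqnorm, cone_form; cbv beta iota;
  rewrite ?pow2_sqrt_div_mul by (lra || assumption).

Lemma sqnorm_F (p : pt) :
  sqnorm (F a b c lam p) = sqnorm p - lam * cone_form a b c 0 p.
Proof.
  destruct p as [[x y] z]; unfold_F.
  field; repeat split; assumption.
Qed.

Lemma cone_form_F_lam (p : pt) :
  cone_form a b c lam (F a b c lam p) = cone_form a b c 0 p.
Proof.
  destruct p as [[x y] z]; unfold_F.
  field; repeat split; lra || assumption.
Qed.

(* Partial fractions: (t - lam) / (t (t - mu)) = lam / (mu t) + (mu - lam) / (mu (t - mu)). *)
Lemma cone_form_F (mu : R) (p : pt) :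
  mu <> 0 -> a ^ 2 - mu <> 0 -> b ^ 2 - mu <> 0 -> c ^ 2 + mu <> 0 ->
  cone_form a b c mu (F a b c lam p) =
  lam / mu * cone_form a b c 0 p + (mu - lam) / mu * cone_form a b c mu p.
Proof.
  intros Hmu Ha Hb Hc.
  destruct p as [[x y] z]; unfold_F.
  field; repeat split; lra || assumption.
Qed.

Lemma sphere_F (p : pt) :
  in_S a b c 0 p -> in_sphere (F a b c lam p).
Proof.
  intros [H0 Hs]; apply in_cone_form in H0; apply in_sphere_sqnorm in Hs.
  apply in_sphere_sqnorm; rewrite sqnorm_F, H0, Hs; ring.
Qed.

Lemma F_maps_S_into_S_lam (p : pt) :
  in_S a b c 0 p -> in_S a b c lam (F a b c lam p).
Proof.
  intros HS; split; [| exact (sphere_F p HS)].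
  destruct HS as [H0 _].
  apply in_cone_form; apply in_cone_form in H0.
  rewrite cone_form_F_lam; exact H0.
Qed.

Lemma F_preserves_S_mu (mu : R) (p : pt) :
  mu <> 0 -> a ^ 2 - mu <> 0 -> b ^ 2 - mu <> 0 -> c ^ 2 + mu <> 0 ->
  in_S a b c 0 p -> in_S a b c mu p -> in_S a b c mu (F a b c lam p).
Proof.
  intros Hmu Ha Hb Hc HS [Hcone _]; split; [| exact (sphere_F p HS)].
  destruct HS as [H0 _].
  apply in_cone_form; apply in_cone_form in H0, Hcone.
  rewrite cone_form_F, H0, Hcone by assumption; field; exact Hmu.
Qed.

End ConfocalMap.

Theorem mainTheorem14 (a b c lam : R) :
  0 < b -> b < a -> 0 < c ->
  - c ^ 2 < lam -> lam < b ^ 2 ->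
  (forall v : pt, in_S a b c 0 v -> in_S a b c lam (F a b c lam v)) /\
  (forall (v : pt) (mu : R),
     mu <> 0 -> mu <> a ^ 2 -> mu <> b ^ 2 -> mu <> - c ^ 2 ->
     in_S a b c 0 v -> in_S a b c mu v -> in_S a b c mu (F a b c lam v)).
Proof.
  intros Hb Hba Hc Hlam_c Hlam_b.
  assert (Hb2a2 : b ^ 2 < a ^ 2) by nra.
  assert (Ha0 : a <> 0) by lra.
  assert (Hb0 : b <> 0) by lra.
  assert (Hc0 : c <> 0) by lra.
  split.
  - intros v; apply F_maps_S_into_S_lam; lra || assumption.
  - intros v mu Hmu Hmua Hmub Hmuc.
    apply F_preserves_S_mu; lra || assumption.
Qed.
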